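(* Let $\alpha=(\alpha_1,\ldots,\alpha_m)$ be a partition of $n$ and $r\ge 1$ an integer. Then $$\mathbf{C}_{\alpha}(\mathbf{z})\circ p_1^r=\mathbf{C}_{\alpha^r}(\mathbf{z}),$$ where $\alpha^r$ is the partition of $nr$ containing exactly $r$ copies of each part of $\alpha$, and $\circ$ denotes plethysm.
   Context: For a partition $\alpha$ of $n$ let $\sigma_\alpha\in S_n$ be any permutation of cycle type $\alpha$ and $o(\sigma_\alpha)$ its order. The cyclic symmetric function of the first kind is $\mathbf{C}_\alpha(\mathbf{z})=\frac{1}{o(\sigma_\alpha)}\sum_{g\in\langle\sigma_\alpha\rangle}p_{\lambda(g)}$, where $\lambda(g)$ is the cycle type of $g$ and $p_\lambda$ is the power-sum symmetric function (this is the cycle index series of the molecular species $X^n/\langle\sigma_\alpha\rangle$). Plethysm with $p_1^r$: $f\circ p_1^r$ is obtained from $f$ (written in power sums) by substituting $p_k\mapsto p_k^r$ for all $k$. *)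

From HB Require Import structures.
From mathcomp Require Import all_boot all_order all_algebra all_fingroup.
From mathcomp Require Import mpoly.
Set Implicit Arguments. Unset Strict Implicit. Unset Printing Implicit Defensive.
Import GRing.Theory.
Local Open Scope ring_scope.

(* Symmetric functions over Q written in the power-sum basis: since the
   power sums p_1, p_2, ... are algebraically independent, the (degree <= N
   part of the) ring of symmetric functions is the polynomial ring
   Q[p_1,...,p_N].  Variable 'X_(k-1) of {mpoly rat[N]} stands for p_k. *)
Definition psum (N k : nat) : {mpoly rat[N]} :=
  match @insub nat (fun i => i < N)%N _ k.-1 with
  | Some i => 'X_i
  | None => 0
  end.

Definition p_cycletype (N n : nat) (g : 'S_n) : {mpoly rat[N]} :=
  \prod_(C in porbits g) psum N #|C|.

Definition has_cycle_type (n : nat) (g : 'S_n) (alpha : seq nat) : bool :=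
  perm_eq [seq #|(C : {set 'I_n})| | C <- enum (porbits g)] alpha.

Definition is_partition (alpha : seq nat) (n : nat) : bool :=
  all (fun a => 0 < a)%N alpha && (sumn alpha == n).

Definition part_rep (alpha : seq nat) (r : nat) : seq nat :=
  flatten [seq nseq r a | a <- alpha].

(* Cyclic symmetric function of the first kind, C_alpha, computed from a
   permutation sigma of cycle type alpha:
   (1 / o(sigma)) * sum_{g in <sigma>} p_{lambda(g)}. *)
Definition cyclicC (N n : nat) (sigma : 'S_n) : {mpoly rat[N]} :=
  (#[sigma]%g)%:R^-1 *: \sum_(g in <[sigma]>%g) p_cycletype N g.

(* Plethysm with p_1^r: substitute p_k |-> p_k^r for all k. *)
Definition pleth_p1r (N r : nat) (f : {mpoly rat[N]}) : {mpoly rat[N]} :=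
  f \mPo [tuple ('X_i : {mpoly rat[N]}) ^+ r | i < N].

(* Under s^j a cycle of s of length a splits into gcd(a, j) cycles of length
   a / gcd(a, j), so the cycle type of s^j is determined by that of s.  Hence
   if sigma has cycle type alpha and tau has cycle type alpha^r, then tau^j has
   cycle type lambda(sigma^j)^r for every j, and in particular sigma and tau
   have the same order.  Plethysm with p_1^r is the ring morphism
   p_k |-> p_k^r, which maps p_lambda to p_(lambda^r); summing over the powers
   of sigma and of tau gives C_alpha o p_1^r = C_(alpha^r). *)

From HB Require Import structures.
From mathcomp Require Import all_boot all_order all_algebra all_fingroup.
From mathcomp Require Import cyclic mpoly.
Set Implicit Arguments. Unset Strict Implicit. Unset Printing Implicit Defensive.

Section CycleType.
Variable T : finType.
Implicit Types (s : {perm T}) (x : T).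

Definition cycle_type s : seq nat := [seq #|(C : {set T})| | C <- enum (porbits s)].

Lemma permX_fixE s i x : ((s ^+ i)%g x == x) = (#|porbit s x| %| i).
Proof.
set L := #|porbit s x|; have L_gt0 : 0 < L by rewrite lt0n card_porbit_neq0.
have iter_mulL q : iter (q * L) s x = x.
  by elim: q => // q IHq; rewrite mulSn iterD IHq iter_porbit.
rewrite permX {1}(divn_eq i L) addnC iterD iter_mulL /dvdn.
have [-> | rem_gt0] := posnP (i %% L); first by rewrite eqxx.
have := nth_uniq x (i := i %% L) (j := 0) _ _ (uniq_traject_porbit s x).
rewrite !size_traject !nth_traject ?ltn_pmod // => /(_ isT L_gt0) ->.
by rewrite gtn_eqF.
Qed.

Lemma card_porbitX s j x :
  #|porbit (s ^+ j)%g x| = #|porbit s x| %/ gcdn #|porbit s x| j.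
Proof.
set L := #|porbit s x|; set d := gcdn L j.
have d_gt0 : 0 < d by rewrite gcdn_gt0 lt0n card_porbit_neq0.
have coprime_quo : coprime (L %/ d) (j %/ d).
  by rewrite /coprime -(eqn_pmul2r d_gt0) muln_gcdl !divnK ?dvdn_gcdl ?dvdn_gcdr ?mul1n.
suff dvd_porbitX i : (#|porbit (s ^+ j)%g x| %| i) = (L %/ d %| i).
  by apply/eqP; rewrite eqn_dvd dvd_porbitX dvdnn -dvd_porbitX dvdnn.
rewrite -permX_fixE -expgM permX_fixE -/L.
rewrite -[X in X %| _](divnK (dvdn_gcdl L j)) -[j in j * i](divnK (dvdn_gcdr L j)).
by rewrite -/d mulnAC dvdn_pmul2r // (Gauss_dvdr _ coprime_quo).
Qed.

Lemma card_porbit_pred s (P : pred nat) :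
  #|[pred x | P #|porbit s x|]| = \sum_(a <- cycle_type s | P a) a.
Proof.
rewrite big_map big_enum_cond /= -sum1_card.
rewrite (partition_big (porbit s) (mem (porbits s))) => [|x _]; last exact: imset_f.
rewrite [RHS]big_mkcondr; apply: eq_bigr => _ /imsetP[y _ ->].
rewrite (eq_bigl (fun x => P #|porbit s y| && (x \in porbit s y))) => [|x].
  by case: ifP => _; [rewrite sum1_card | rewrite big_pred0].
rewrite !inE eq_porbit_mem andbC [RHS]andbC; apply: andb_id2l.
by rewrite -eq_porbit_mem => /eqP ->.
Qed.

Lemma count_cycle_typeX s j k :
  count_mem k (cycle_type (s ^+ j)%g) * k
    = \sum_(a <- cycle_type s | a %/ gcdn a j == k) a.
Proof.
have -> : count_mem k (cycle_type (s ^+ j)%g) * k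
            = \sum_(a <- cycle_type (s ^+ j)%g | a == k) a.
  by rewrite (eq_bigr (fun=> k)) => [|a /eqP //]; rewrite big_const_seq iter_addn_0 mulnC.
by rewrite -!card_porbit_pred; apply: eq_card => x; rewrite !inE card_porbitX.
Qed.

Lemma cycle_type_neq0 s : 0 \notin cycle_type s.
Proof.
apply/mapP => -[C]; rewrite mem_enum => /imsetP[y _ ->] /esym /eqP.
by rewrite (negbTE (card_porbit_neq0 _ _)).
Qed.

Lemma perm1_cycle_type s : (s == 1%g) = all (pred1 1) (cycle_type s).
Proof.
have fixE x : (s x == x) = (#|porbit s x| == 1) by rewrite -dvdn1 -permX_fixE expg1.
apply/eqP/allP => [s1 a /mapP[C] | cycles1].
  by rewrite mem_enum => /imsetP[y _ ->] ->; rewrite /= -fixE s1 perm1.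
apply/permP => x; rewrite perm1; apply/eqP; rewrite fixE; apply: cycles1.
by apply/mapP; exists (porbit s x); rewrite ?mem_enum ?imset_f.
Qed.

End CycleType.

Section PartRep.
Variables (s : seq nat) (r : nat).

Lemma count_part_rep (P : pred nat) : count P (part_rep s r) = r * count P s.
Proof.
elim: s => [|a t IHt] /=; first by rewrite muln0.
by rewrite count_cat count_nseq -/(part_rep t r) IHt mulnDr mulnC.
Qed.

Lemma all_part_rep (P : pred nat) : 0 < r -> all P (part_rep s r) = all P s.
Proof.
move=> r_gt0; elim: s => //= a t IHt.
by rewrite all_cat all_nseq -/(part_rep t r) IHt eqn0Ngt r_gt0.
Qed.

Lemma big_part_rep (R : Type) (idx : R) (op : Monoid.com_law idx)
    (P : pred nat) (F : nat -> R) :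
  \big[op/idx]_(a <- part_rep s r | P a) F a
    = \big[op/idx]_(i < r) \big[op/idx]_(a <- s | P a) F a.
Proof.
elim: s => [|a t IHt] /=; first by rewrite big_nil big1_eq.
rewrite big_cat -/(part_rep t r) IHt big_nseq_cond.
under [RHS]eq_bigr do rewrite big_cons.
case: (P a); last by rewrite Monoid.mul1m.
by rewrite big_split /=; congr (op _ _); rewrite big_const_ord.
Qed.

End PartRep.

Lemma perm_part_rep s t r : perm_eq s t -> perm_eq (part_rep s r) (part_rep t r).
Proof. by move=> /seq.permP st; apply/seq.permP => P; rewrite !count_part_rep st. Qed.

Section CycleTypeRep.
Variables (T T' : finType) (g : {perm T}) (h : {perm T'}) (r : nat).
Hypothesis h_type : perm_eq (cycle_type h) (part_rep (cycle_type g) r).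

Lemma cycle_typeX_part_rep j :
  perm_eq (cycle_type (h ^+ j)%g) (part_rep (cycle_type (g ^+ j)%g) r).
Proof.
apply/allP => k _; apply/eqP; rewrite count_part_rep.
have [-> | k_gt0] := posnP k.
  by rewrite !(count_memPn (cycle_type_neq0 _)) muln0.
apply/eqP; rewrite -(eqn_pmul2r k_gt0) -mulnA !count_cycle_typeX.
by rewrite (perm_big _ h_type) big_part_rep sum_nat_const card_ord.
Qed.

Lemma order_part_rep : 0 < r -> #[h]%g = #[g]%g.
Proof.
move=> r_gt0.
have expg_eq1 m : ((h ^+ m)%g == 1%g) = ((g ^+ m)%g == 1%g).
  by rewrite !perm1_cycle_type (perm_all _ (cycle_typeX_part_rep m)) all_part_rep.
apply/eqP; rewrite eqn_dvd !order_dvdn expg_eq1 expg_order -expg_eq1 expg_order.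
by rewrite !eqxx.
Qed.

End CycleTypeRep.

Import GRing.Theory.
Local Open Scope ring_scope.

Lemma big_cycle (gT : finGroupType) (x : gT) (R : Type) (idx : R)
    (op : Monoid.com_law idx) (F : gT -> R) :
  \big[op/idx]_(y in <[x]>%g) F y = \big[op/idx]_(i < #[x]%g) F (x ^+ i)%g.
Proof.
have -> : <[x]>%g = (fun i : 'I_#[x]%g => (x ^+ i)%g) @: setT.
  apply/setP => y; apply/idP/imsetP => [/cyclePmin[i lt_i_x ->] | [i _ ->]].
    by exists (Ordinal lt_i_x).
  exact: mem_cycle.
rewrite big_imset => [|i j _ _ /eqP]; last first.
  by rewrite eq_expg_mod_order !modn_small // => /eqP /val_inj.
by apply: eq_bigl => i; rewrite inE.
Qed.

Lemma p_cycletypeE N n (s : 'S_n) :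
  p_cycletype N s = \prod_(a <- cycle_type s) psum N a.
Proof. by rewrite /p_cycletype big_map big_enum. Qed.

Lemma cyclicCE N n (s : 'S_n) :
  cyclicC N s
    = (#[s]%g)%:R^-1 *: \sum_(i < #[s]%g) \prod_(a <- cycle_type (s ^+ i)%g) psum N a.
Proof. by rewrite /cyclicC big_cycle; under eq_bigr do rewrite p_cycletypeE. Qed.

Lemma pleth_p1r_psum N r a : (0 < r)%N -> pleth_p1r r (psum N a) = psum N a ^+ r.
Proof.
move=> r_gt0; rewrite /pleth_p1r /psum; case: insubP => [i _ _ | _].
  by rewrite comp_mpolyXU -tnth_nth tnth_mktuple.
by rewrite comp_mpoly0 expr0n gtn_eqF.
Qed.

Lemma pleth_p1r_prod_psum N r s : (0 < r)%N ->
  pleth_p1r r (\prod_(a <- s) psum N a) = \prod_(a <- part_rep s r) psum N a.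
Proof.
move=> r_gt0; rewrite /pleth_p1r rmorph_prod.
rewrite big_part_rep prodr_const card_ord -prodrXl.
by apply: eq_bigr => a _; apply: pleth_p1r_psum.
Qed.

Theorem mainTheorem2 (n r : nat) (alpha : seq nat) (N : nat)
  (sigma : 'S_n) (tau : 'S_(n * r)) :
  is_partition alpha n -> (1 <= r)%N -> (n * r <= N)%N ->
  has_cycle_type sigma alpha ->
  has_cycle_type tau (part_rep alpha r) ->
  pleth_p1r r (cyclicC N sigma) = cyclicC N tau.
Proof.
move=> _ r_gt0 _ sigma_type tau_type.
have tau_sigma : perm_eq (cycle_type tau) (part_rep (cycle_type sigma) r).
  by apply: perm_trans tau_type _; apply: perm_part_rep; rewrite perm_sym.
rewrite !cyclicCE (order_part_rep tau_sigma r_gt0) /pleth_p1r comp_mpolyZ rmorph_sum.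
congr (_ *: _); apply: eq_bigr => i _.
rewrite -[LHS]/(pleth_p1r r _) pleth_p1r_prod_psum //.
by apply: perm_big; rewrite perm_sym cycle_typeX_part_rep.
Qed.
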